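(* Let $a>0$, $b>0$, let $p\in\mathbb{N}$, and let $t>1$. Then \[ a\gamma + b\ln p + a\psi(t) - b\psi_p(t) > 0 . \]
   Context: $\gamma$ denotes the Euler–Mascheroni constant and $\psi(t)=\Gamma'(t)/\Gamma(t)$ is the digamma function for $t>0$, where $\Gamma$ is Euler's Gamma function. For $p\in\mathbb{N}$ and $t>0$, the $p$-Gamma function is $\Gamma_p(t)=\frac{p!\,p^t}{t(t+1)\cdots(t+p)}$, and $\psi_p(t)=\frac{d}{dt}\ln\Gamma_p(t)=\Gamma_p'(t)/\Gamma_p(t)$. *)

From Stdlib Require Import Reals.
From Coquelicot Require Import Coquelicot.
Open Scope R_scope.

Definition Gamma (t : R) : R :=
  RInt_gen (fun x => Rpower x (t - 1) * exp (- x))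
           (at_right 0) (Rbar_locally p_infty).

Definition digamma (t : R) : R := Derive Gamma t / Gamma t.

Definition euler_gamma : R :=
  real (Lim_seq (fun n => sum_f_R0 (fun k => / INR (S k)) (pred n) - ln (INR n))).

Definition Gamma_p (p : nat) (t : R) : R :=
  INR (Factorial.fact p) * Rpower (INR p) t / prod_f_R0 (fun k => t + INR k) p.

Definition psi_p (p : nat) (t : R) : R := Derive (fun s => ln (Gamma_p p s)) t.

(* For [t > 1] we show [euler_gamma + digamma t >= 1 - 1/t > 0], while
   [ln p - psi_p p t = sum_(k=0)^p 1/(t+k) > 0] is a direct computation.

   The digamma bound goes through Gauss's formula [Gamma s = lim_n Gamma_p n s], derived
   from Euler's integral: the Beta integral gives
   [Gamma_p n s = \int_0^n x^(s-1) (1 - x/n)^n dx], and [(1 - x/n)^n] approximates [e^(-x)]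
   within [x^2 e^(-x) / n].  Since
   [ln Gamma_p n (t+h) - ln Gamma_p n t = h ln n - sum_k ln ((t+h+k)/(t+k))
                                       >= h (ln n - sum_k 1/(t+k))],
   letting [n -> oo] gives [ln Gamma (t+h) - ln Gamma t >= h (1 - 1/t - euler_gamma)];
   concavity of [ln] bounds the same increments above by [O(h)].  Hence the difference
   quotients of [Gamma] at [t] stay between [Gamma t (1 - 1/t - euler_gamma)] and a
   constant, and so does [Derive Gamma t]. *)

From Stdlib Require Import Reals Lra Lia.
From Coquelicot Require Import Coquelicot.
Open Scope R_scope.

Lemma ln_le_sub_1 x : 0 < x -> ln x <= x - 1.
Proof.
  intros Hx. rewrite <- (ln_exp (x - 1)).
  apply ln_le; [exact Hx | pose proof (exp_ineq1_le (x - 1)); lra].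
Qed.

Lemma ln_sub_ln_bounds u v : 0 < u -> u <= v ->
  (v - u) / v <= ln v - ln u <= (v - u) / u.
Proof.
  intros Hu Huv.
  assert (Huv' : 0 < u / v) by (apply Rdiv_lt_0_compat; lra).
  assert (Hvu : 0 < v / u) by (apply Rdiv_lt_0_compat; lra).
  pose proof (ln_le_sub_1 _ Huv') as Hl. pose proof (ln_le_sub_1 _ Hvu) as Hr.
  rewrite ln_div in Hl, Hr by lra.
  replace (u / v - 1) with (- ((v - u) / v)) in Hl by (field; lra).
  replace (v / u - 1) with ((v - u) / u) in Hr by (field; lra).
  lra.
Qed.

Lemma ln_succ_sub_ln_le x : 0 < x -> ln (x + 1) - ln x <= / x.
Proof.
  intros Hx. pose proof (ln_sub_ln_bounds x (x + 1) Hx ltac:(lra)) as [_ H].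
  replace (x + 1 - x) with 1 in H by ring. unfold Rdiv in H. lra.
Qed.

Lemma ln_succ_sub_ln_ge x : 0 < x -> / (x + 1) <= ln (x + 1) - ln x.
Proof.
  intros Hx. pose proof (ln_sub_ln_bounds x (x + 1) Hx ltac:(lra)) as [H _].
  replace (x + 1 - x) with 1 in H by ring. unfold Rdiv in H. lra.
Qed.

Lemma ln_0 : ln 0 = 0.
Proof. unfold ln. destruct (Rlt_dec 0 0); [exfalso; lra | reflexivity]. Qed.

Lemma exp_sub_1_le x : exp x - 1 <= x * exp x.
Proof.
  pose proof (exp_ineq1_le (- x)) as H. pose proof (exp_pos x).
  rewrite exp_Ropp in H.
  assert (H' : (1 - x) * exp x <= / exp x * exp x) by (apply Rmult_le_compat_r; lra).
  rewrite Rinv_l in H' by lra. lra.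
Qed.

Lemma exp_le_exp_of_le x y : x <= y -> exp x <= exp y.
Proof. intros [Hxy | <-]; [apply Rlt_le, exp_increasing, Hxy | apply Rle_refl]. Qed.

Lemma exp_mul_INR n x : exp (INR n * x) = exp x ^ n.
Proof.
  induction n as [|n IH]; simpl pow.
  - rewrite Rmult_0_l. apply exp_0.
  - rewrite S_INR, <- IH, <- exp_plus. f_equal. ring.
Qed.

Lemma pow_one_sub_ge y n : 0 <= y <= 1 -> 1 - INR n * y <= (1 - y) ^ n.
Proof.
  intros Hy. induction n as [|n IH]; simpl pow; [simpl; lra|].
  rewrite S_INR. pose proof (pos_INR n). pose proof (pow_le (1 - y) n ltac:(lra)). nra.
Qed.

Definition euler_seq (n : nat) : R :=
  sum_f_R0 (fun k => / INR (S k)) (pred n) - ln (INR n).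

Lemma euler_seq_decr n : euler_seq (S n) <= euler_seq n.
Proof.
  unfold euler_seq. destruct n as [|n]; simpl pred.
  - simpl. rewrite ln_0, ln_1. lra.
  - rewrite tech5, (S_INR (S n)).
    pose proof (ln_succ_sub_ln_ge (INR (S n)) (lt_0_INR _ (Nat.lt_0_succ n))).
    lra.
Qed.

Lemma ln_le_harmonic m : ln (INR (S (S m))) <= sum_f_R0 (fun k => / INR (S k)) m.
Proof.
  induction m as [|m IH].
  - simpl. rewrite Rinv_1. pose proof (ln_le_sub_1 (1 + 1)). lra.
  - rewrite tech5, (S_INR (S (S m))).
    pose proof (ln_succ_sub_ln_le (INR (S (S m))) (lt_0_INR _ (Nat.lt_0_succ _))).
    lra.
Qed.

Lemma euler_seq_ge_0 n : 0 <= euler_seq n.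
Proof.
  unfold euler_seq. destruct n as [|n]; simpl pred.
  - simpl. rewrite ln_0. lra.
  - pose proof (ln_le_harmonic n).
    pose proof (ln_le (INR (S n)) (INR (S (S n)))
      (lt_0_INR _ (Nat.lt_0_succ n)) (le_INR _ _ (Nat.le_succ_diag_r _))).
    lra.
Qed.

Lemma is_lim_seq_euler_seq : is_lim_seq euler_seq euler_gamma.
Proof.
  apply Lim_seq_correct', (ex_finite_lim_seq_decr _ 0).
  - exact euler_seq_decr.
  - exact euler_seq_ge_0.
Qed.

Lemma shifted_prod_pos m s : 0 < s -> 0 < prod_f_R0 (fun k => s + INR k) m.
Proof.
  intros Hs. induction m as [|m IH]; [simpl; lra|]. cbn [prod_f_R0].
  apply Rmult_lt_0_compat; [exact IH | pose proof (pos_INR (S m)); lra].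
Qed.

Lemma ln_shifted_prod m s : 0 < s ->
  ln (prod_f_R0 (fun k => s + INR k) m) = sum_f_R0 (fun k => ln (s + INR k)) m.
Proof.
  intros Hs. induction m as [|m IH]; [reflexivity|].
  cbn [prod_f_R0]. rewrite tech5, ln_mult, IH; [reflexivity | |].
  - apply shifted_prod_pos, Hs.
  - pose proof (pos_INR (S m)). lra.
Qed.

Lemma ln_Gamma_p p s : (1 <= p)%nat -> 0 < s ->
  ln (Gamma_p p s) = ln (INR (Factorial.fact p)) + s * ln (INR p)
                     - sum_f_R0 (fun k => ln (s + INR k)) p.
Proof.
  intros Hp Hs. unfold Gamma_p.
  pose proof (lt_0_INR _ (Factorial.lt_O_fact p)).
  pose proof (shifted_prod_pos p s Hs).
  assert (0 < Rpower (INR p) s) by apply exp_pos.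
  rewrite ln_div, ln_mult, ln_Rpower, ln_shifted_prod; auto.
  apply Rmult_lt_0_compat; auto.
Qed.

Lemma is_derive_sum_ln_shift m s : 0 < s ->
  is_derive (fun s => sum_f_R0 (fun k => ln (s + INR k)) m) s
            (sum_f_R0 (fun k => / (s + INR k)) m).
Proof.
  intros Hs.
  assert (Hk : forall k, is_derive (fun s => ln (s + INR k)) s (/ (s + INR k))).
  { intros k. pose proof (pos_INR k). auto_derive; [lra | field; lra]. }
  induction m as [|m IH]; [apply Hk|].
  exact (is_derive_plus _ _ s _ _ IH (Hk (S m))).
Qed.

Lemma psi_p_eq p t : (1 <= p)%nat -> 0 < t ->
  psi_p p t = ln (INR p) - sum_f_R0 (fun k => / (t + INR k)) p.
Proof.
  intros Hp Ht. apply is_derive_unique.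
  apply (is_derive_ext_loc (fun s => ln (INR (Factorial.fact p)) + s * ln (INR p)
                                     - sum_f_R0 (fun k => ln (s + INR k)) p)).
  - apply (filter_imp (fun s => 0 < s)); [|exact (open_gt 0 t Ht)].
    intros s Hs. symmetry. exact (ln_Gamma_p p s Hp Hs).
  - assert (Hlin : is_derive (fun s => ln (INR (Factorial.fact p)) + s * ln (INR p))
                              t (ln (INR p))) by (auto_derive; [exact I | ring]).
    exact (is_derive_minus _ _ t _ _ Hlin (is_derive_sum_ln_shift p t Ht)).
Qed.

Lemma Rpower_pos x y : 0 < Rpower x y.
Proof. apply exp_pos. Qed.

Lemma Rpower_1_l y : Rpower 1 y = 1.
Proof. unfold Rpower. rewrite ln_1, Rmult_0_r. apply exp_0. Qed.

Lemma Rpower_le_1 x y : 0 <= x <= 1 -> 0 <= y -> Rpower x y <= 1.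
Proof.
  intros [[Hx | <-] Hx1] Hy.
  - rewrite <- (Rpower_1_l y). apply Rle_Rpower_l; lra.
  - unfold Rpower. rewrite ln_0, Rmult_0_r, exp_0. lra.
Qed.

Lemma Rpower_succ x y : 0 < x -> Rpower x (y + 1) = x * Rpower x y.
Proof. intros Hx. rewrite Rpower_plus, Rpower_1 by exact Hx. ring. Qed.

(* [Rpower x y = 1] for [x <= 0] (because [ln x = 0] there), so [fun x => Rpower x y]
   jumps at [0]; integrability up to [0] goes through this continuous extension. *)
Definition rpower0 (y x : R) : R := if Rle_dec x 0 then 0 else Rpower x y.

Lemma continuous_rpower0 y x : 0 < y -> 0 <= x -> continuous (rpower0 y) x.
Proof.
  intros Hy [Hx | <-].
  - apply (continuous_ext_loc _ (fun x => Rpower x y)).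
    + apply (filter_imp (fun z => 0 < z)); [|exact (open_gt 0 x Hx)].
      intros z Hz. unfold rpower0. destruct (Rle_dec z 0); [lra | reflexivity].
    + apply continuity_pt_filterlim, derivable_continuous_pt.
      exists (y * Rpower x (y - 1)). apply derivable_pt_lim_power, Hx.
  - apply (proj2 (filterlim_locally _ _)). intros eps.
    exists (mkposreal _ (Rpower_pos eps (/ y))). intros z Hz.
    change (Rabs (z - 0) < Rpower eps (/ y)) in Hz.
    change (Rabs (rpower0 y z - rpower0 y 0) < eps).
    unfold rpower0. destruct (Rle_dec 0 0) as [_ | ]; [|lra].
    destruct (Rle_dec z 0); [rewrite Rminus_0_r, Rabs_R0; apply cond_pos|].
    rewrite Rminus_0_r, Rabs_pos_eq by apply Rlt_le, Rpower_pos.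
    rewrite Rminus_0_r, Rabs_pos_eq in Hz by lra.
    replace (pos eps) with (Rpower (Rpower eps (/ y)) y)
      by (rewrite Rpower_mult, Rinv_l, Rpower_1; [reflexivity | apply cond_pos | lra]).
    apply Rlt_Rpower_l; lra.
Qed.

Lemma ex_RInt_Rpower_mul y g a b : 0 < y -> 0 <= a <= b ->
  (forall x, a <= x <= b -> continuous g x) ->
  ex_RInt (fun x => Rpower x y * g x) a b.
Proof.
  intros Hy Hab Hg. apply (ex_RInt_ext (fun x => rpower0 y x * g x)).
  - intros x Hx. rewrite Rmin_left, Rmax_right in Hx by lra.
    unfold rpower0. destruct (Rle_dec x 0); [lra | reflexivity].
  - apply (ex_RInt_continuous (V := R_CompleteNormedModule)). intros x Hx.
    rewrite Rmin_left, Rmax_right in Hx by lra.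
    apply (continuous_mult (rpower0 y) g); [apply continuous_rpower0 | apply Hg]; lra.
Qed.

Lemma eq_0_of_Rabs_le_small x : (forall e, 0 < e < 1 -> Rabs x <= e) -> x = 0.
Proof.
  intros Hsmall. destruct (Req_dec x 0) as [|Hx]; [assumption|].
  pose proof (Rabs_pos_lt x Hx). set (e := Rmin (1 / 2) (Rabs x / 2)).
  assert (He : 0 < e) by (apply Rmin_glb_lt; lra).
  pose proof (Rmin_l (1 / 2) (Rabs x / 2)). pose proof (Rmin_r (1 / 2) (Rabs x / 2)).
  pose proof (Hsmall e ltac:(unfold e in *; lra)). unfold e in *. lra.
Qed.

Lemma is_RInt_Rpower_0_1 s : 1 < s -> is_RInt (fun u => Rpower u (s - 1)) 0 1 (/ s).
Proof.
  intros Hs. set (F := fun u => Rpower u (s - 1)).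
  assert (Hint : forall a b, 0 <= a <= b -> ex_RInt F a b).
  { intros a b Hab. apply (ex_RInt_ext (fun u => Rpower u (s - 1) * 1)).
    - intros u _. apply Rmult_1_r.
    - apply ex_RInt_Rpower_mul; [lra | exact Hab | intros; apply continuous_const]. }
  enough (HF : RInt F 0 1 - / s = 0).
  { replace (/ s) with (RInt F 0 1) by lra.
    apply (RInt_correct (V := R_CompleteNormedModule)), Hint; lra. }
  apply eq_0_of_Rabs_le_small. intros e He. set (a := e / 2).
  assert (Htail : is_RInt F a 1 (/ s * Rpower 1 s - / s * Rpower a s)).
  { apply (is_RInt_derive (fun x => / s * Rpower x s)); intros x Hx;
      rewrite Rmin_left, Rmax_right in Hx by (unfold a; lra).
    - apply is_derive_Reals. unfold F.
      replace (Rpower x (s - 1)) with (/ s * (s * Rpower x (s - 1))) by (field; lra).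
      apply derivable_pt_lim_scal, derivable_pt_lim_power. unfold a in Hx. lra.
    - apply continuity_pt_filterlim, derivable_continuous_pt.
      exists ((s - 1) * Rpower x (s - 1 - 1)). apply derivable_pt_lim_power. unfold a in Hx. lra. }
  assert (Hhead : Rabs (RInt F 0 a) <= (a - 0) * 1).
  { apply abs_RInt_le_const; [unfold a; lra | apply Hint; unfold a; lra|].
    intros x Hx. rewrite Rabs_pos_eq by apply Rlt_le, Rpower_pos.
    apply Rpower_le_1; unfold a in Hx; lra. }
  assert (Has : Rpower a s <= a).
  { replace s with ((s - 1) + 1) at 1 by ring. rewrite Rpower_succ by (unfold a; lra).
    pose proof (Rpower_le_1 a (s - 1) ltac:(unfold a; lra) ltac:(lra)).
    pose proof (Rpower_pos a (s - 1)). unfold a in *. nra. }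
  assert (Hinv : 0 < / s < 1).
  { split; [apply Rinv_0_lt_compat | rewrite <- Rinv_1; apply Rinv_lt_contravar]; lra. }
  pose proof (Rpower_pos a s).
  rewrite <- (RInt_Chasles F 0 a 1) by (apply Hint; unfold a; lra).
  rewrite (is_RInt_unique _ _ _ _ Htail).
  change (plus ?x ?y) with (x + y). rewrite Rpower_1_l.
  apply Rabs_le_between in Hhead. apply Rabs_le. unfold a in *. nra.
Qed.

Lemma shifted_prod_succ s m :
  prod_f_R0 (fun k => s + INR k) (S m) = s * prod_f_R0 (fun k => s + 1 + INR k) m.
Proof.
  induction m as [|m IH]; [simpl; ring|].
  cbn [prod_f_R0] in *. rewrite IH, (S_INR (S m)). ring.
Qed.

Lemma is_RInt_beta s m : 1 < s ->
  is_RInt (fun u => Rpower u (s - 1) * (1 - u) ^ m) 0 1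
          (INR (Factorial.fact m) / prod_f_R0 (fun k => s + INR k) m).
Proof.
  revert s. induction m as [|m IH]; intros s Hs.
  - replace (INR (Factorial.fact 0) / prod_f_R0 (fun k => s + INR k) 0) with (/ s)
      by (simpl; field; lra).
    apply (is_RInt_ext (fun u => Rpower u (s - 1))); [intros; simpl; ring|].
    apply is_RInt_Rpower_0_1, Hs.
  - (* [(1 - u)^(m+1) = (1 - u)^m - u (1 - u)^m] and [u * u^(s-1) = u^((s+1)-1)]. *)
    pose proof (is_RInt_minus _ _ _ _ _ _ (IH s Hs) (IH (s + 1) ltac:(lra))) as Hdiff.
    pose proof (shifted_prod_pos m s ltac:(lra)) as HP.
    assert (HPS : prod_f_R0 (fun k => s + INR k) (S m)
                  = prod_f_R0 (fun k => s + INR k) m * (s + INR (S m))) by reflexivity.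
    assert (Hm : 0 < s + INR (S m)) by (pose proof (pos_INR (S m)); lra).
    assert (Hval : INR (Factorial.fact (S m)) / prod_f_R0 (fun k => s + INR k) (S m)
                   = INR (Factorial.fact m) / prod_f_R0 (fun k => s + INR k) m
                     - INR (Factorial.fact m) / prod_f_R0 (fun k => s + 1 + INR k) m).
    { replace (prod_f_R0 (fun k => s + 1 + INR k) m)
        with (prod_f_R0 (fun k => s + INR k) m * (s + INR (S m)) / s)
        by (rewrite <- HPS, shifted_prod_succ; field; lra).
      rewrite HPS. cbn [Factorial.fact]. rewrite mult_INR, S_INR.
      rewrite S_INR in Hm. field. lra. }
    assert (Hpt : forall x, 0 < x ->
      Rpower x (s - 1) * (1 - x) ^ m - Rpower x (s + 1 - 1) * (1 - x) ^ m
      = Rpower x (s - 1) * (1 - x) ^ S m).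
    { intros x Hx. replace (s + 1 - 1) with ((s - 1) + 1) by ring.
      rewrite Rpower_succ by exact Hx. simpl pow. ring. }
    rewrite Hval. refine (is_RInt_ext _ _ _ _ _ _ Hdiff).
    intros x Hx. rewrite Rmin_left in Hx by lra. exact (Hpt x (proj1 Hx)).
Qed.

Definition gauss_integrand (s : R) (n : nat) (x : R) : R :=
  Rpower x (s - 1) * (1 - x / INR n) ^ n.

Lemma is_RInt_gauss_integrand s n : 1 < s -> (1 <= n)%nat ->
  is_RInt (gauss_integrand s n) 0 (INR n) (Gamma_p n s).
Proof.
  intros Hs Hn. set (N := INR n).
  assert (HN : 0 < N) by (apply lt_0_INR; lia).
  pose proof (is_RInt_beta s n Hs) as Hbeta.
  pose proof (shifted_prod_pos n s ltac:(lra)).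
  assert (Hbeta' : is_RInt (fun u => Rpower u (s - 1) * (1 - u) ^ n)
                           (/ N * 0 + 0) (/ N * N + 0)
                           (INR (Factorial.fact n) / prod_f_R0 (fun k => s + INR k) n)).
  { replace (/ N * 0 + 0) with 0 by ring. replace (/ N * N + 0) with 1 by (field; lra).
    exact Hbeta. }
  (* substitute [u = x / N] and scale by [N ^ s] *)
  pose proof (is_RInt_scal _ _ _ (Rpower N s) _ (is_RInt_comp_lin _ (/ N) 0 0 N _ Hbeta'))
    as Hscaled.
  assert (Hval : Gamma_p n s = Rpower N s
                 * (INR (Factorial.fact n) / prod_f_R0 (fun k => s + INR k) n))
    by (unfold Gamma_p; fold N; field; lra).
  assert (Hpt : forall x, 0 < x ->
    Rpower N s * (/ N * (Rpower (/ N * x + 0) (s - 1) * (1 - (/ N * x + 0)) ^ n))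
    = gauss_integrand s n x).
  { intros x Hx. unfold gauss_integrand. fold N.
    replace s with ((s - 1) + 1) at 1 by ring. rewrite Rpower_succ by exact HN.
    rewrite Rplus_0_r, (Rmult_comm (/ N) x).
    replace (Rpower x (s - 1)) with (Rpower N (s - 1) * Rpower (x * / N) (s - 1)).
    - unfold Rdiv. field. lra.
    - rewrite Rpower_mult_distr by (try apply Rmult_lt_0_compat, Rinv_0_lt_compat; lra).
      f_equal. field. lra. }
  rewrite Hval. refine (is_RInt_ext _ _ _ _ _ _ Hscaled).
  intros x Hx. rewrite Rmin_left in Hx by lra. exact (Hpt x (proj1 Hx)).
Qed.

Definition gamma_integrand (s x : R) : R := Rpower x (s - 1) * exp (- x).

Lemma gamma_integrand_ge_0 s x : 0 <= gamma_integrand s x.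
Proof. apply Rmult_le_pos; apply Rlt_le, exp_pos. Qed.

Lemma exp_neg_le_1 x : 0 <= x -> exp (- x) <= 1.
Proof. intros Hx. rewrite <- exp_0. apply exp_le_exp_of_le. lra. Qed.

Lemma gamma_integrand_le_1 s x : 1 <= s -> 0 <= x <= 1 -> gamma_integrand s x <= 1.
Proof.
  intros Hs Hx. pose proof (Rpower_le_1 x (s - 1) Hx ltac:(lra)).
  pose proof (exp_neg_le_1 x ltac:(lra)). pose proof (Rpower_pos x (s - 1)).
  pose proof (exp_pos (- x)). unfold gamma_integrand. nra.
Qed.

Lemma pow_one_sub_div_le_exp n x : (1 <= n)%nat -> 0 <= x <= INR n ->
  0 <= (1 - x / INR n) ^ n <= exp (- x).
Proof.
  intros Hn Hx. assert (HN : 0 < INR n) by (apply lt_0_INR; lia).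
  assert (Hy : x / INR n <= 1) by (apply (Rdiv_le_1 x (INR n) HN); lra).
  split; [apply pow_le; lra|].
  replace (- x) with (INR n * (- (x / INR n))) by (field; lra).
  rewrite exp_mul_INR. apply pow_incr.
  pose proof (exp_ineq1_le (- (x / INR n))). lra.
Qed.

(* From [(1 - y)(1 + y) = 1 - y^2], [1 + y <= exp y] and Bernoulli's inequality. *)
Lemma exp_sub_pow_one_sub_div_le n x : (1 <= n)%nat -> 0 <= x <= INR n ->
  exp (- x) - (1 - x / INR n) ^ n <= x ^ 2 * exp (- x) / INR n.
Proof.
  intros Hn Hx. set (N := INR n) in *. set (y := x / N).
  assert (HN : 0 < N) by (apply lt_0_INR; lia).
  assert (Hy : 0 <= y <= 1) by (split; [apply Rdiv_le_0_compat | apply (Rdiv_le_1 x N HN)]; lra).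
  assert (Hx' : N * y = x) by (unfold y; field; lra).
  assert (Hsq : (1 - y ^ 2) ^ n <= ((1 - y) * exp y) ^ n).
  { apply pow_incr. split; [nra|].
    replace (1 - y ^ 2) with ((1 - y) * (1 + y)) by ring.
    apply Rmult_le_compat_l; [lra | apply exp_ineq1_le]. }
  rewrite Rpow_mult_distr, <- exp_mul_INR in Hsq. fold N in Hsq. rewrite Hx' in Hsq.
  pose proof (pow_one_sub_ge (y ^ 2) n ltac:(split; nra)) as Hbern. fold N in Hbern.
  assert (Hmul : exp (- x) * (1 - N * y ^ 2) <= exp (- x) * ((1 - y) ^ n * exp x))
    by (apply Rmult_le_compat_l; [apply Rlt_le, exp_pos | lra]).
  replace (exp (- x) * ((1 - y) ^ n * exp x)) with ((1 - y) ^ n) in Hmul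
    by (rewrite Rmult_comm, Rmult_assoc, <- exp_plus, Rplus_opp_r, exp_0; ring).
  replace (x ^ 2 * exp (- x) / N) with (exp (- x) * (N * y ^ 2)) by (rewrite <- Hx'; field; lra).
  lra.
Qed.

Lemma gauss_integrand_bounds s n x : (1 <= n)%nat -> 0 <= x <= INR n ->
  0 <= gauss_integrand s n x <= gamma_integrand s x /\
  gamma_integrand s x - gauss_integrand s n x <= x ^ 2 * gamma_integrand s x / INR n.
Proof.
  intros Hn Hx. pose proof (pow_one_sub_div_le_exp n x Hn Hx).
  pose proof (exp_sub_pow_one_sub_div_le n x Hn Hx).
  assert (HN : 0 < INR n) by (apply lt_0_INR; lia).
  pose proof (Rpower_pos x (s - 1)).
  unfold gauss_integrand, gamma_integrand. split; [split|].
  - apply Rmult_le_pos; lra.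
  - apply Rmult_le_compat_l; lra.
  - replace (x ^ 2 * (Rpower x (s - 1) * exp (- x)) / INR n)
      with (Rpower x (s - 1) * (x ^ 2 * exp (- x) / INR n)) by (field; lra).
    rewrite <- Rmult_minus_distr_l. apply Rmult_le_compat_l; lra.
Qed.

Lemma pow_mul_exp_neg_le N x : (1 <= N)%nat -> 0 <= x -> x ^ N * exp (- x) <= INR N ^ N.
Proof.
  intros HN Hx. assert (HN' : 0 < INR N) by (apply lt_0_INR; lia).
  assert (Hle : (x / INR N) ^ N <= exp x).
  { replace (exp x) with (exp (x / INR N) ^ N) by (rewrite <- exp_mul_INR; f_equal; field; lra).
    apply pow_incr. pose proof (exp_ineq1_le (x / INR N)).
    split; [apply Rdiv_le_0_compat|]; lra. }
  replace (x ^ N) with (INR N ^ N * (x / INR N) ^ N)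
    by (rewrite <- Rpow_mult_distr; f_equal; field; lra).
  pose proof (pow_lt _ N HN'). pose proof (exp_pos (- x)).
  assert (Hmul : INR N ^ N * (x / INR N) ^ N * exp (- x) <= INR N ^ N * (exp x * exp (- x)))
    by (rewrite <- Rmult_assoc; apply Rmult_le_compat_r; [lra | apply Rmult_le_compat_l; lra]).
  rewrite <- exp_plus, Rplus_opp_r, exp_0, Rmult_1_r in Hmul. exact Hmul.
Qed.

Lemma Rpower_mul_exp_neg_bounded y : 0 <= y ->
  exists K, forall x, 0 < x -> Rpower x y * exp (- x) <= K.
Proof.
  intros Hy. destruct (INR_unbounded y) as [N HN].
  assert (HN1 : (1 <= N)%nat) by (destruct N; [simpl in HN; lra | lia]).
  exists (1 + INR N ^ N). intros x Hx.
  pose proof (pow_le (INR N) N (pos_INR N)). pose proof (exp_pos (- x)).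
  destruct (Rle_dec x 1) as [Hx1 | Hx1].
  - pose proof (Rpower_le_1 x y ltac:(lra) Hy). pose proof (Rpower_pos x y).
    pose proof (exp_neg_le_1 x ltac:(lra)). nra.
  - assert (Rpower x y <= x ^ N)
      by (rewrite <- Rpower_pow by lra; apply Rle_Rpower; lra).
    pose proof (pow_mul_exp_neg_le N x HN1 ltac:(lra)). nra.
Qed.

Lemma gamma_integrand_decay s : 1 < s ->
  exists C, 0 < C /\ forall x, 0 < x -> (1 + x ^ 2) * gamma_integrand s x <= C / (1 + x) ^ 2.
Proof.
  intros Hs.
  destruct (Rpower_mul_exp_neg_bounded (s - 1) ltac:(lra)) as [K1 HK1].
  destruct (Rpower_mul_exp_neg_bounded (s + 3) ltac:(lra)) as [K2 HK2].
  assert (Hdecay : forall x, 0 < x ->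
    (1 + x ^ 2) * gamma_integrand s x <= 4 * (K1 + K2) / (1 + x) ^ 2).
  { intros x Hx. specialize (HK1 x Hx). specialize (HK2 x Hx).
    replace (s + 3) with ((s - 1) + INR 4) in HK2 by (simpl; ring).
    rewrite Rpower_plus, Rpower_pow in HK2 by exact Hx.
    pose proof (gamma_integrand_ge_0 s x). unfold gamma_integrand in *.
    assert (Hsq : 0 < (1 + x) ^ 2) by (apply pow_lt; lra).
    apply Rmult_le_reg_r with ((1 + x) ^ 2); [exact Hsq|].
    replace (4 * (K1 + K2) / (1 + x) ^ 2 * (1 + x) ^ 2) with (4 * (K1 + K2)) by (field; lra).
    assert (Hpoly : (1 + x ^ 2) * (1 + x) ^ 2 <= 4 * (1 + x ^ 4)).
    { assert (H1 : (1 + x) ^ 2 <= 2 * (1 + x ^ 2)) by (pose proof (pow2_ge_0 (1 - x)); nra).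
      assert (H2 : 2 * (1 + x ^ 2) ^ 2 <= 4 * (1 + x ^ 4))
        by (pose proof (pow2_ge_0 (x ^ 2 - 1)); nra).
      assert (0 <= 1 + x ^ 2) by nra. nra. }
    nra. }
  exists (4 * (K1 + K2)). split; [|exact Hdecay].
  pose proof (Hdecay 1 Rlt_0_1) as H1. pose proof (exp_pos (- (1))).
  unfold gamma_integrand in H1. rewrite Rpower_1_l, pow1, Rmult_1_l in H1.
  replace (4 * (K1 + K2)) with (4 * (K1 + K2) / (1 + 1) ^ 2 * 4) by field. lra.
Qed.

Lemma continuous_of_ex_derive (f : R -> R) x : ex_derive f x -> continuous f x.
Proof. apply (ex_derive_continuous (K := R_AbsRing) (V := R_NormedModule)). Qed.

Lemma ex_RInt_gamma_integrand s a b : 1 < s -> 0 <= a <= b ->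
  ex_RInt (gamma_integrand s) a b.
Proof.
  intros Hs Hab. apply ex_RInt_Rpower_mul; [lra | exact Hab|].
  intros x _. apply continuous_of_ex_derive. auto_derive. exact I.
Qed.

Lemma ex_RInt_gauss_integrand s n a b : 1 < s -> (1 <= n)%nat -> 0 <= a <= b ->
  ex_RInt (gauss_integrand s n) a b.
Proof.
  intros Hs Hn Hab. apply ex_RInt_Rpower_mul; [lra | exact Hab|].
  intros x _. apply continuous_of_ex_derive. auto_derive. exact I.
Qed.

Lemma is_RInt_inv_sq K a b : 0 <= a <= b ->
  is_RInt (fun x => K / (1 + x) ^ 2) a b (K / (1 + a) - K / (1 + b)).
Proof.
  intros Hab.
  assert (Hval : K / (1 + a) - K / (1 + b) = - K / (1 + b) - - K / (1 + a))
    by (field; lra).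
  rewrite Hval.
  apply (is_RInt_derive (fun x => - K / (1 + x))); intros x Hx;
    rewrite Rmin_left, Rmax_right in Hx by lra.
  - auto_derive; [lra | field; lra].
  - apply continuous_of_ex_derive. auto_derive. apply Rgt_not_eq. nra.
Qed.

Lemma is_lim_seq_inv_INR : is_lim_seq (fun n => / INR n) 0.
Proof.
  replace (Finite 0) with (Rbar_inv p_infty) by reflexivity.
  apply is_lim_seq_inv; [apply is_lim_seq_INR | discriminate].
Qed.

Lemma is_lim_seq_div_INR C : is_lim_seq (fun n => C / INR n) 0.
Proof.
  replace 0 with (C * 0) by ring.
  exact (is_lim_seq_scal_l _ C 0 is_lim_seq_inv_INR).
Qed.

Section GaussApproximation.

Variables (s C : R).
Hypothesis Hs : 1 < s.
Hypothesis HC : 0 < C.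
Hypothesis Hdecay : forall x, 0 < x -> (1 + x ^ 2) * gamma_integrand s x <= C / (1 + x) ^ 2.
Variable n : nat.
Hypothesis Hn : (1 <= n)%nat.

Let f := gamma_integrand s.
Let g := gauss_integrand s n.

Lemma RInt_gauss_integrand_head a : 0 < a <= 1 -> 0 <= RInt g 0 a <= a.
Proof.
  intros Ha. assert (HN : 1 <= INR n) by (apply (le_INR 1); exact Hn).
  assert (Hg : forall x, 0 <= x <= a -> 0 <= g x <= 1).
  { intros x Hx. destruct (gauss_integrand_bounds s n x Hn ltac:(lra)) as [Hb _].
    pose proof (gamma_integrand_le_1 s x ltac:(lra) ltac:(lra)). unfold g. lra. }
  assert (Hint : ex_RInt g 0 a) by (apply ex_RInt_gauss_integrand; auto; lra).
  split.
  - apply RInt_ge_0; [lra | exact Hint | intros x Hx; apply Hg; lra].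
  - assert (Habs : Rabs (RInt g 0 a) <= (a - 0) * 1).
    { apply abs_RInt_le_const; [lra | exact Hint|].
      intros x Hx. rewrite Rabs_pos_eq; apply Hg; lra. }
    apply Rabs_le_between in Habs. lra.
Qed.

Lemma RInt_gauss_integrand_tail b : 0 <= b <= INR n -> 0 <= RInt g b (INR n) <= C / (1 + b).
Proof.
  intros Hb. set (N := INR n) in *.
  assert (Hfg : forall x, b < x < N -> 0 <= g x <= f x /\ f x <= C / (1 + x) ^ 2).
  { intros x Hx. destruct (gauss_integrand_bounds s n x Hn ltac:(fold N; lra)) as [Hgf _].
    pose proof (Hdecay x ltac:(lra)). pose proof (gamma_integrand_ge_0 s x).
    assert (f x <= (1 + x ^ 2) * f x) by (unfold f; nra). unfold f, g in *. lra. }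
  split.
  - apply RInt_ge_0; [lra | apply ex_RInt_gauss_integrand; auto; lra | apply Hfg].
  - apply Rle_trans with (RInt f b N).
    { apply RInt_le; [lra | apply ex_RInt_gauss_integrand; auto; lra
                      | apply ex_RInt_gamma_integrand; auto; lra |].
      apply Hfg. }
    apply Rle_trans with (C / (1 + b) - C / (1 + N)).
    { apply (is_RInt_le f (fun x => C / (1 + x) ^ 2) b N); [lra | | apply is_RInt_inv_sq; lra|].
      - apply (RInt_correct (V := R_CompleteNormedModule)), ex_RInt_gamma_integrand; lra.
      - intros x Hx. apply Hfg. lra. }
    pose proof (Rdiv_lt_0_compat C (1 + N) HC ltac:(lra)). lra.
Qed.

Lemma RInt_gauss_integrand_middle a b : 0 < a <= b -> b <= INR n ->
  RInt f a b - C / INR n <= RInt g a b <= RInt f a b.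
Proof.
  intros Hab HbN. set (N := INR n) in *.
  assert (HN : 1 <= N) by (apply (le_INR 1); exact Hn).
  assert (Hint_f : ex_RInt f a b) by (apply ex_RInt_gamma_integrand; auto; lra).
  assert (Hint_g : ex_RInt g a b) by (apply ex_RInt_gauss_integrand; auto; lra).
  split.
  - (* the defect [f - g] is at most [x^2 f / N <= C / (N (1 + x)^2)] *)
    assert (Hle : RInt f a b <= RInt g a b + (C / N / (1 + a) - C / N / (1 + b))).
    { apply (is_RInt_le f (fun x => g x + C / N / (1 + x) ^ 2) a b); [lra | | |].
      - apply (RInt_correct (V := R_CompleteNormedModule)), Hint_f.
      - apply (is_RInt_plus (V := R_NormedModule) g (fun x => C / N / (1 + x) ^ 2)).
        + apply (RInt_correct (V := R_CompleteNormedModule)), Hint_g.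
        + apply is_RInt_inv_sq. lra.
      - intros x Hx. destruct (gauss_integrand_bounds s n x Hn ltac:(fold N; lra)) as [_ Hd].
        fold N in Hd.
        pose proof (Hdecay x ltac:(lra)). pose proof (gamma_integrand_ge_0 s x).
        assert (Hsq : 0 < (1 + x) ^ 2) by (apply pow_lt; lra).
        assert (x ^ 2 * f x / N <= C / N / (1 + x) ^ 2).
        { replace (C / N / (1 + x) ^ 2) with (C / (1 + x) ^ 2 / N) by (field; lra).
          apply Rmult_le_compat_r; [apply Rlt_le, Rinv_0_lt_compat; lra|].
          unfold f. nra. }
        unfold f, g in *. lra. }
    assert (C / N / (1 + a) <= C / N).
    { apply Rmult_le_reg_r with (1 + a); [lra|].
      replace (C / N / (1 + a) * (1 + a)) with (C / N) by (field; lra).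
      pose proof (Rdiv_lt_0_compat C N HC ltac:(lra)). nra. }
    pose proof (Rdiv_lt_0_compat (C / N) (1 + b) (Rdiv_lt_0_compat C N HC ltac:(lra)) ltac:(lra)).
    lra.
  - apply RInt_le; [lra | exact Hint_g | exact Hint_f|].
    intros x Hx.
    destruct (gauss_integrand_bounds s n x Hn ltac:(fold N; lra)) as [[_ Hle] _].
    exact Hle.
Qed.

Lemma Gamma_p_split a b : 0 < a <= 1 -> a <= b <= INR n ->
  Gamma_p n s = RInt g 0 a + RInt g a b + RInt g b (INR n).
Proof.
  intros Ha Hb.
  rewrite <- (is_RInt_unique _ _ _ _ (is_RInt_gauss_integrand s n Hs Hn)). fold g.
  rewrite <- (RInt_Chasles (V := R_CompleteNormedModule) g 0 b (INR n))
    by (apply ex_RInt_gauss_integrand; auto; lra).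
  rewrite <- (RInt_Chasles (V := R_CompleteNormedModule) g 0 a b)
    by (apply ex_RInt_gauss_integrand; auto; lra).
  reflexivity.
Qed.

Lemma Rabs_RInt_gamma_integrand_sub_Gamma_p a b : 0 < a <= 1 -> a <= b <= INR n ->
  Rabs (RInt f a b - Gamma_p n s) <= C / INR n + a + C / (1 + b).
Proof.
  intros Ha Hb. rewrite (Gamma_p_split a b Ha Hb).
  pose proof (RInt_gauss_integrand_head a Ha).
  pose proof (RInt_gauss_integrand_tail b ltac:(lra)).
  pose proof (RInt_gauss_integrand_middle a b ltac:(lra) ltac:(lra)).
  apply Rabs_le. lra.
Qed.

Lemma Gamma_p_ge_RInt_gamma_integrand a b : 0 < a <= 1 -> a <= b <= INR n ->
  RInt f a b - C / INR n <= Gamma_p n s.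
Proof.
  intros Ha Hb. rewrite (Gamma_p_split a b Ha Hb).
  pose proof (RInt_gauss_integrand_head a Ha).
  pose proof (RInt_gauss_integrand_tail b ltac:(lra)).
  pose proof (RInt_gauss_integrand_middle a b ltac:(lra) ltac:(lra)).
  lra.
Qed.

End GaussApproximation.

Lemma div_INR_lt_eventually C e : 0 <= C -> 0 < e ->
  exists N, (1 <= N)%nat /\ forall n, (N <= n)%nat -> C / INR n < e.
Proof.
  intros HC He. destruct (INR_unbounded (C / e)) as [M HM].
  exists (S M). split; [lia|]. intros n Hn.
  assert (HMn : INR (S M) <= INR n) by (apply le_INR; exact Hn).
  rewrite S_INR in HMn. pose proof (Rdiv_le_0_compat C e HC He).
  apply Rmult_lt_reg_r with (INR n); [lra|].
  replace (C / INR n * INR n) with (C / e * e) by (field; lra).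
  rewrite (Rmult_comm e). apply Rmult_lt_compat_r; lra.
Qed.

Section TruncatedIntegral.

Variables (f : R -> R) (u : nat -> R) (C : R).
Hypothesis Hf : forall a b, 0 < a <= b -> ex_RInt f a b.
Hypothesis HC : 0 < C.
Hypothesis Happrox : forall n a b, (1 <= n)%nat -> 0 < a <= 1 -> a <= b <= INR n ->
  Rabs (RInt f a b - u n) <= C / INR n + a + C / (1 + b).

Lemma truncation_cauchy : ex_finite_lim_seq u.
Proof.
  apply ex_lim_seq_cauchy_corr. intros [e He]. simpl.
  destruct (div_INR_lt_eventually C (e / 8) ltac:(lra) ltac:(lra)) as [N [HN1 HN]].
  set (a := Rmin 1 (e / 8)).
  assert (Ha : 0 < a <= 1) by (split; [apply Rmin_glb_lt | apply Rmin_l]; lra).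
  pose proof (Rmin_r 1 (e / 8)) as Hae.
  assert (HN' : 1 <= INR N) by (apply (le_INR 1); exact HN1).
  assert (Htail : C / (1 + INR N) <= C / INR N).
  { apply Rmult_le_compat_l; [lra | apply Rinv_le_contravar; lra]. }
  pose proof (HN N (Nat.le_refl N)).
  exists N. intros n m Hn Hm.
  assert (Hbound : forall k, (N <= k)%nat -> Rabs (RInt f a (INR N) - u k) <= 3 * (e / 8)).
  { intros k Hk. assert (INR N <= INR k) by (apply le_INR; exact Hk).
    pose proof (HN k Hk).
    pose proof (Happrox k a (INR N) ltac:(lia) Ha ltac:(lra)). unfold a in *. lra. }
  pose proof (Hbound n Hn) as Hbn. pose proof (Hbound m Hm) as Hbm.
  apply Rabs_le_between in Hbn. apply Rabs_le_between in Hbm.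
  apply Rabs_def1; lra.
Qed.

Let l := real (Lim_seq u).

Lemma is_lim_seq_truncation : is_lim_seq u l.
Proof. exact (Lim_seq_correct' u truncation_cauchy). Qed.

Lemma truncation_limit_bound a b : 0 < a <= 1 -> a <= b ->
  Rabs (RInt f a b - l) <= a + C / (1 + b).
Proof.
  intros Ha Hb. destruct (INR_unbounded b) as [M HM].
  assert (Hev : eventually (fun n => Rabs (RInt f a b - u n) <= C / INR n + a + C / (1 + b))).
  { exists (Nat.max M 1). intros n Hn. apply Happrox; [lia | exact Ha|].
    split; [exact Hb|]. apply Rle_trans with (INR M); [lra | apply le_INR; lia]. }
  assert (Hlim : is_lim_seq (fun n => C / INR n + a + C / (1 + b)) (0 + a + C / (1 + b))).
  { apply is_lim_seq_plus'; [apply is_lim_seq_plus'|]; try apply is_lim_seq_const.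
    apply is_lim_seq_div_INR. }
  pose proof (is_lim_seq_le_loc _ _ _ _ Hev
    (is_lim_seq_abs _ _ (is_lim_seq_minus' _ _ _ _ (is_lim_seq_const (RInt f a b))
                                             is_lim_seq_truncation)) Hlim) as Hle.
  simpl in Hle. lra.
Qed.

Lemma is_RInt_gen_truncation : is_RInt_gen f (at_right 0) (Rbar_locally p_infty) l.
Proof.
  intros P [[e He] HP]. simpl in HP.
  set (a0 := Rmin 1 (e / 2)). set (b0 := Rmax 1 (2 * C / e)).
  assert (Ha0 : 0 < a0) by (apply Rmin_glb_lt; lra).
  pose proof (Rmin_l 1 (e / 2)). pose proof (Rmin_r 1 (e / 2)).
  pose proof (Rmax_l 1 (2 * C / e)). pose proof (Rmax_r 1 (2 * C / e)).
  apply Filter_prod with (Q := fun a => 0 < a < a0) (R := fun b => b0 < b).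
  - exists (mkposreal a0 Ha0). intros y Hy Hy0.
    change (Rabs (y - 0) < a0) in Hy. apply Rabs_def2 in Hy. lra.
  - exists b0. auto.
  - intros a b Ha Hb. simpl. exists (RInt f a b). split.
    + apply (RInt_correct (V := R_CompleteNormedModule)), Hf. unfold a0, b0 in *. lra.
    + apply HP. change (Rabs (RInt f a b - l) < e).
      pose proof (truncation_limit_bound a b ltac:(unfold a0 in *; lra)
                                             ltac:(unfold a0, b0 in *; lra)).
      assert (C / (1 + b) < e / 2).
      { apply Rmult_lt_reg_r with (1 + b); [unfold b0 in *; lra|].
        replace (C / (1 + b) * (1 + b)) with C by (field; unfold b0 in *; lra).
        assert (Hb' : 2 * C / e < b) by (unfold b0 in *; lra).
        assert (Hc : e / 2 * (2 * C / e) = C) by (field; lra).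
        rewrite <- Hc at 1. apply Rmult_lt_compat_l; lra. }
      unfold a0 in *. lra.
Qed.

End TruncatedIntegral.

Lemma is_lim_seq_Gamma_p s : 1 < s -> is_lim_seq (fun n => Gamma_p n s) (Gamma s).
Proof.
  intros Hs. destruct (gamma_integrand_decay s Hs) as [C [HC Hdecay]].
  assert (Hf : forall a b, 0 < a <= b -> ex_RInt (gamma_integrand s) a b)
    by (intros; apply ex_RInt_gamma_integrand; lra).
  pose proof (fun n a b Hn => Rabs_RInt_gamma_integrand_sub_Gamma_p s C Hs HC Hdecay n Hn a b)
    as Happrox.
  pose proof (is_RInt_gen_truncation _ _ _ Hf HC Happrox) as HI.
  assert (HG : Gamma s = real (Lim_seq (fun n => Gamma_p n s))).
  { unfold Gamma.
    exact (is_RInt_gen_unique (Fa := at_right 0) (Fb := Rbar_locally p_infty) _ _ HI). }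
  rewrite HG. exact (is_lim_seq_truncation _ _ _ HC Happrox).
Qed.

Lemma RInt_gamma_integrand_1_2_ge s : 1 < s -> exp (-2) <= RInt (gamma_integrand s) 1 2.
Proof.
  intros Hs.
  enough (H : scal (2 - 1) (exp (-2)) <= RInt (gamma_integrand s) 1 2)
    by (change (scal ?x ?y) with (x * y) in H; lra).
  apply (is_RInt_le (fun _ => exp (-2)) (gamma_integrand s) 1 2);
    [lra | apply (is_RInt_const (V := R_NormedModule)) | |].
  { apply (RInt_correct (V := R_CompleteNormedModule)), ex_RInt_gamma_integrand; lra. }
  intros x Hx. unfold gamma_integrand.
  assert (1 <= Rpower x (s - 1)).
  { pose proof (Rle_Rpower x 0 (s - 1) ltac:(lra) ltac:(lra)) as H.
    rewrite Rpower_O in H by lra. exact H. }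
  assert (exp (-2) <= exp (- x)) by (apply Rlt_le, exp_increasing; lra).
  pose proof (exp_pos (-2)). nra.
Qed.

Lemma Gamma_pos s : 1 < s -> 0 < Gamma s.
Proof.
  intros Hs. destruct (gamma_integrand_decay s Hs) as [C [HC Hdecay]].
  assert (Hev : eventually (fun n => exp (-2) - C / INR n <= Gamma_p n s)).
  { exists 2%nat. intros n Hn. assert (2 <= INR n) by (apply (le_INR 2); exact Hn).
    pose proof (RInt_gamma_integrand_1_2_ge s Hs).
    pose proof (Gamma_p_ge_RInt_gamma_integrand s C Hs HC Hdecay n ltac:(lia) 1 2
                  ltac:(lra) ltac:(lra)).
    lra. }
  pose proof (is_lim_seq_le_loc _ _ _ _ Hev
    (is_lim_seq_minus' _ _ _ _ (is_lim_seq_const (exp (-2))) (is_lim_seq_div_INR C))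
    (is_lim_seq_Gamma_p s Hs)) as Hle.
  simpl in Hle. pose proof (exp_pos (-2)). lra.
Qed.

Lemma ln_Gamma_p_increment n t h : (1 <= n)%nat -> 0 < t -> 0 < h ->
  ln (Gamma_p n (t + h)) - ln (Gamma_p n t)
  = h * ln (INR n) - sum_f_R0 (fun k => ln (t + h + INR k) - ln (t + INR k)) n.
Proof. intros. rewrite !ln_Gamma_p, minus_sum by (auto; lra). ring. Qed.

Lemma sum_inv_shift_le t m : 1 <= t ->
  sum_f_R0 (fun k => / (t + INR k)) m <= / t - 1 + sum_f_R0 (fun k => / INR (S k)) m.
Proof.
  intros Ht. induction m as [|m IH].
  - simpl. rewrite Rplus_0_r, Rinv_1. lra.
  - rewrite !tech5. assert (/ (t + INR (S m)) <= / INR (S (S m))).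
    { apply Rinv_le_contravar; [apply lt_0_INR; lia | rewrite (S_INR (S m)); lra]. }
    lra.
Qed.

Lemma ln_Gamma_p_increment_ge n t h : (1 <= n)%nat -> 1 <= t -> 0 < h ->
  h * (1 - / t - euler_seq (S n) - / INR n) <= ln (Gamma_p n (t + h)) - ln (Gamma_p n t).
Proof.
  intros Hn Ht Hh. rewrite ln_Gamma_p_increment by (auto; lra).
  assert (Hterm : sum_f_R0 (fun k => ln (t + h + INR k) - ln (t + INR k)) n
                  <= h * sum_f_R0 (fun k => / (t + INR k)) n).
  { rewrite scal_sum. apply sum_Rle. intros k _. pose proof (pos_INR k).
    pose proof (ln_sub_ln_bounds (t + INR k) (t + h + INR k) ltac:(lra) ltac:(lra)) as [_ Hle].
    replace (t + h + INR k - (t + INR k)) with h in Hle by ring. unfold Rdiv in Hle. lra. }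
  pose proof (sum_inv_shift_le t n Ht) as Hsum.
  pose proof (ln_succ_sub_ln_le (INR n) (lt_0_INR n ltac:(lia))) as Hln.
  rewrite <- S_INR in Hln.
  unfold euler_seq. simpl pred.
  assert (h * sum_f_R0 (fun k => / (t + INR k)) n
          <= h * (/ t - 1 + sum_f_R0 (fun k => / INR (S k)) n))
    by (apply Rmult_le_compat_l; lra).
  assert (h * (ln (INR (S n)) - ln (INR n)) <= h * / INR n) by (apply Rmult_le_compat_l; lra).
  nra.
Qed.

Lemma ln_chord_le y h : 0 < y -> 0 < h <= 1 ->
  h * (ln (y + 1) - ln y) <= ln (y + h) - ln y.
Proof.
  intros Hy Hh.
  pose proof (ln_sub_ln_bounds y (y + h) Hy ltac:(lra)) as [Hlow _].
  pose proof (ln_sub_ln_bounds (y + h) (y + 1) ltac:(lra) ltac:(lra)) as [_ Hup].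
  replace (y + h - y) with h in Hlow by ring.
  replace (y + 1 - (y + h)) with (1 - h) in Hup by ring.
  assert (h * (ln (y + 1) - ln (y + h)) <= h * ((1 - h) / (y + h)))
    by (apply Rmult_le_compat_l; lra).
  assert ((1 - h) * (h / (y + h)) <= (1 - h) * (ln (y + h) - ln y))
    by (apply Rmult_le_compat_l; lra).
  assert (h * ((1 - h) / (y + h)) = (1 - h) * (h / (y + h))) by (field; lra).
  nra.
Qed.

Lemma ln_Gamma_p_increment_le n t h : (1 <= n)%nat -> 0 < t -> 0 < h <= 1 ->
  ln (Gamma_p n (t + h)) - ln (Gamma_p n t)
  <= h * (ln (Gamma_p n (t + 1)) - ln (Gamma_p n t)).
Proof.
  intros Hn Ht Hh. rewrite !ln_Gamma_p_increment by (auto; lra).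
  assert (Hsum : h * sum_f_R0 (fun k => ln (t + 1 + INR k) - ln (t + INR k)) n
                 <= sum_f_R0 (fun k => ln (t + h + INR k) - ln (t + INR k)) n).
  { rewrite scal_sum. apply sum_Rle. intros k _. pose proof (pos_INR k).
    replace (t + 1 + INR k) with ((t + INR k) + 1) by ring.
    replace (t + h + INR k) with ((t + INR k) + h) by ring.
    rewrite Rmult_comm. apply ln_chord_le; lra. }
  lra.
Qed.

Lemma is_lim_seq_ln_Gamma_p s : 1 < s -> is_lim_seq (fun n => ln (Gamma_p n s)) (ln (Gamma s)).
Proof.
  intros Hs. apply is_lim_seq_continuous; [|exact (is_lim_seq_Gamma_p s Hs)].
  apply continuity_pt_filterlim, continuous_ln, Gamma_pos, Hs.
Qed.

Lemma ln_Gamma_increment_bounds t h : 1 < t -> 0 < h <= 1 ->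
  h * (1 - / t - euler_gamma) <= ln (Gamma (t + h)) - ln (Gamma t)
  <= h * (ln (Gamma (t + 1)) - ln (Gamma t)).
Proof.
  intros Ht Hh.
  assert (Hincr : forall c, 1 < t + c -> is_lim_seq
            (fun n => ln (Gamma_p n (t + c)) - ln (Gamma_p n t))
            (ln (Gamma (t + c)) - ln (Gamma t))).
  { intros c Hc. apply is_lim_seq_minus'; apply is_lim_seq_ln_Gamma_p; lra. }
  split.
  - assert (Hlow : is_lim_seq (fun n => h * (1 - / t - euler_seq (S n) - / INR n))
                              (h * (1 - / t - euler_gamma - 0))).
    { apply (is_lim_seq_scal_l _ h (1 - / t - euler_gamma - 0)).
      apply is_lim_seq_minus'; [apply is_lim_seq_minus'|].
      - apply is_lim_seq_const.
      - apply (is_lim_seq_incr_1 euler_seq), is_lim_seq_euler_seq.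
      - exact is_lim_seq_inv_INR. }
    pose proof (is_lim_seq_le_loc _ _ _ _
      (ex_intro _ 1%nat (fun n Hn => ln_Gamma_p_increment_ge n t h Hn ltac:(lra) ltac:(lra)))
      Hlow (Hincr h ltac:(lra))) as Hle.
    simpl in Hle. lra.
  - pose proof (is_lim_seq_le_loc _ _ _ _
      (ex_intro _ 1%nat (fun n Hn => ln_Gamma_p_increment_le n t h Hn ltac:(lra) Hh))
      (Hincr h ltac:(lra)) (is_lim_seq_scal_l _ h _ (Hincr 1 ltac:(lra)))) as Hle.
    simpl in Hle. exact Hle.
Qed.

Lemma Gamma_difference_quotient_bounds t h : 1 < t -> 0 < h <= 1 ->
  let M := Rabs (ln (Gamma (t + 1)) - ln (Gamma t)) in
  Gamma t * (1 - / t - euler_gamma) <= (Gamma (t + h) - Gamma t) / h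
  <= Gamma t * (M * exp M).
Proof.
  intros Ht Hh M.
  pose proof (Gamma_pos t ltac:(lra)) as Hpos. pose proof (Gamma_pos (t + h) ltac:(lra)).
  destruct (ln_Gamma_increment_bounds t h Ht Hh) as [Hlow Hup].
  set (D := ln (Gamma (t + h)) - ln (Gamma t)) in *.
  assert (HD : Gamma (t + h) = Gamma t * exp D).
  { unfold D, Rminus. rewrite exp_plus, exp_Ropp, !exp_ln by lra. field. lra. }
  replace ((Gamma (t + h) - Gamma t) / h) with (Gamma t * ((exp D - 1) / h))
    by (rewrite HD; field; lra).
  split; apply Rmult_le_compat_l; try lra;
    apply Rmult_le_reg_r with h; try lra;
    replace ((exp D - 1) / h * h) with (exp D - 1) by (field; lra).
  - pose proof (exp_ineq1_le D). lra.
  - (* [exp D - 1 <= exp (h M) - 1 <= h M exp (h M) <= h M exp M] *)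
    assert (HhM : D <= h * M).
    { pose proof (Rle_abs (ln (Gamma (t + 1)) - ln (Gamma t))).
      apply Rle_trans with (h * (ln (Gamma (t + 1)) - ln (Gamma t))); [exact Hup|].
      apply Rmult_le_compat_l; unfold M; lra. }
    pose proof (exp_le_exp_of_le _ _ HhM).
    pose proof (exp_sub_1_le (h * M)).
    assert (HM : 0 <= M) by apply Rabs_pos.
    assert (exp (h * M) <= exp M) by (apply exp_le_exp_of_le; nra).
    assert (h * M * exp (h * M) <= h * M * exp M) by (apply Rmult_le_compat_l; nra).
    lra.
Qed.

(* [Derive f x] is the [Lim_seq] of the quotients along [h = 1 / (n + 1)], whether or not
   [f] is differentiable, so two-sided bounds on the quotients bound [Derive f x]. *)
Lemma Derive_ge_of_difference_quotient f x m M :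
  (forall h, 0 < h <= 1 -> m <= (f (x + h) - f x) / h <= M) -> m <= Derive f x.
Proof.
  intros Hq. unfold Derive, Lim. simpl Rbar_loc_seq.
  set (u := fun n => (f (x + (0 + / (INR n + 1))) - f x) / (0 + / (INR n + 1))).
  assert (Hu : forall n, m <= u n <= M).
  { intros n. apply Hq. pose proof (pos_INR n). rewrite Rplus_0_l. split.
    - apply Rinv_0_lt_compat. lra.
    - rewrite <- Rinv_1. apply Rinv_le_contravar; lra. }
  assert (Hm : Rbar_le m (Lim_seq u)).
  { rewrite <- (Lim_seq_const m). apply Lim_seq_le_loc. exists 0%nat. intros n _. apply Hu. }
  assert (HM : Rbar_le (Lim_seq u) M).
  { rewrite <- (Lim_seq_const M). apply Lim_seq_le_loc. exists 0%nat. intros n _. apply Hu. }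
  fold u. destruct (Lim_seq u); simpl in *; [exact Hm | contradiction | contradiction].
Qed.

Lemma digamma_ge t : 1 < t -> 1 - / t - euler_gamma <= digamma t.
Proof.
  intros Ht. pose proof (Gamma_pos t ltac:(lra)) as Hpos.
  pose proof (Derive_ge_of_difference_quotient Gamma t _ _
                (fun h Hh => Gamma_difference_quotient_bounds t h Ht Hh)) as HD.
  unfold digamma. apply Rmult_le_reg_r with (Gamma t); [exact Hpos|].
  replace (Derive Gamma t / Gamma t * Gamma t) with (Derive Gamma t) by (field; lra).
  lra.
Qed.

Lemma sum_inv_shift_pos t m : 0 < t -> 0 < sum_f_R0 (fun k => / (t + INR k)) m.
Proof.
  intros Ht. induction m as [|m IH].
  - simpl. apply Rinv_0_lt_compat. lra.
  - rewrite tech5. pose proof (pos_INR (S m)).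
    pose proof (Rinv_0_lt_compat (t + INR (S m)) ltac:(lra)). lra.
Qed.

Theorem lemma3p1 (a b : R) (p : nat) (t : R) :
  0 < a -> 0 < b -> (1 <= p)%nat -> 1 < t ->
  a * euler_gamma + b * ln (INR p) + a * digamma t - b * psi_p p t > 0.
Proof.
  intros Ha Hb Hp Ht.
  rewrite psi_p_eq by (auto; lra).
  assert (Hinv : / t < 1) by (rewrite <- Rinv_1; apply Rinv_lt_contravar; lra).
  assert (Hdigamma : a * (1 - / t) <= a * (euler_gamma + digamma t))
    by (apply Rmult_le_compat_l; [lra | pose proof (digamma_ge t Ht); lra]).
  pose proof (Rmult_lt_0_compat a (1 - / t) Ha ltac:(lra)).
  pose proof (Rmult_lt_0_compat b _ Hb (sum_inv_shift_pos t p ltac:(lra))).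
  lra.
Qed.
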